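(* Let $S$ be a functional PTS specification and $\Gamma$ a context of $\lambda S$. For any $\Gamma$-term $M$ and any $\Gamma$-type $A$ of $\lambda S$: (1) $\varphi(|M|_\Gamma)\equiv_\beta M$; (2) $\psi(\|A\|_\Gamma)\equiv_\beta A$.
   Context: PTS: a specification $S=(\mathcal S,\mathcal A,\mathcal R)$ (sorts, axioms $(s_1:s_2)$, rules $(s_1,s_2,s_3)$), functional meaning $\mathcal A$ and $\mathcal R$ are functional relations; terms $s\mid x\mid M\,N\mid\lambda x:A.M\mid\Pi x:A.B$; $\lambda S$ has the standard PTS typing rules with conversion modulo $\equiv_\beta$. A $\Gamma$-term is $M$ with $\Gamma$ well formed and $\Gamma\vdash_{\lambda S}M:A$ for some $A$; a $\Gamma$-type is $A$ with $\Gamma$ well formed and $\Gamma\vdash A:s$ or $A=s$ for a sort $s$. The target syntax ($\lambda\Pi/S$) uses the constants $u_s,\varepsilon_s$ ($s\in\mathcal S$), $\dot s_1$ ($(s_1:s_2)\in\mathcal A$), $\dot\pi_{s_1s_2s_3}$ ($(s_1,s_2,s_3)\in\mathcal R$), with $u_s:\mathsf{Type}$, $\varepsilon_s:u_s\to\mathsf{Type}$, $\dot s_1:u_{s_2}$, $\dot\pi_{s_1s_2s_3}:\Pi\alpha:u_{s_1}.(\varepsilon_{s_1}\alpha\to u_{s_2})\to u_{s_3}$. Forward translation: $|s|_\Gamma=\dot s$, $|x|_\Gamma=x$, $|M\,N|_\Gamma=|M|_\Gamma|N|_\Gamma$, $|\lambda x:A.M|_\Gamma=\lambda x:\|A\|_\Gamma.|M|_{\Gamma,x:A}$,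 $|\Pi x:A.B|_\Gamma=\dot\pi_{s_1s_2s_3}|A|_\Gamma(\lambda x:\|A\|_\Gamma.|B|_{\Gamma,x:A})$ with $\Gamma\vdash A:s_1$, $\Gamma,x:A\vdash B:s_2$, $(s_1,s_2,s_3)\in\mathcal R$; $\|s\|_\Gamma=u_s$, $\|\Pi x:A.B\|_\Gamma=\Pi x:\|A\|_\Gamma.\|B\|_{\Gamma,x:A}$, otherwise $\|A\|_\Gamma=\varepsilon_s|A|_\Gamma$ where $\Gamma\vdash A:s$. Inverse translations (partial functions into terms of PTS syntax): $\varphi(\dot s)=s$, $\varphi(\dot\pi_{s_1s_2s_3})=\lambda\alpha:s_1.\lambda\beta:(\alpha\to s_2).\Pi x:\alpha.\beta\,x$, $\varphi(x)=x$, $\varphi(M\,N)=\varphi(M)\varphi(N)$, $\varphi(\lambda x:A.M)=\lambda x:\psi(A).\varphi(M)$; $\psi(u_s)=s$, $\psi(\varepsilon_s M)=\varphi(M)$, $\psi(\Pi x:A.B)=\Pi x:\psi(A).\psi(B)$. *)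

From Stdlib Require Import List Arith Relations.
Import ListNotations.
Set Implicit Arguments.

Record spec := Spec {
  sorts : Type;
  axiom : sorts -> sorts -> Prop;          (* (s1 : s2) in A *)
  rule  : sorts -> sorts -> sorts -> Prop
}.

Definition functional (S : spec) : Prop :=
  (forall s s1 s2, axiom S s s1 -> axiom S s s2 -> s1 = s2) /\
  (forall s1 s2 s3 s3', rule S s1 s2 s3 -> rule S s1 s2 s3' -> s3 = s3').

Inductive term (Srt : Type) : Type :=
| Sort : Srt -> term Srt
| Var  : nat -> term Srt
| App  : term Srt -> term Srt -> term Srt
| Lam  : term Srt -> term Srt -> term Srt     (* Lam A M = \x:A. M *)
| Pi   : term Srt -> term Srt -> term Srt.    (* Pi A B  = Pi x:A. B *)
Arguments Var {Srt} _.

Fixpoint lift_rec {Srt} (n k : nat) (t : term Srt) : term Srt :=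
  match t with
  | Sort s => Sort s
  | Var i => if k <=? i then Var (i + n) else Var i
  | App M N => App (lift_rec n k M) (lift_rec n k N)
  | Lam A M => Lam (lift_rec n k A) (lift_rec n (S k) M)
  | Pi A B => Pi (lift_rec n k A) (lift_rec n (S k) B)
  end.
Definition lift {Srt} (n : nat) (t : term Srt) := lift_rec n 0 t.

Fixpoint subst_rec {Srt} (N t : term Srt) (k : nat) : term Srt :=
  match t with
  | Sort s => Sort s
  | Var i => match Nat.compare i k with
             | Lt => Var i
             | Eq => lift k N
             | Gt => Var (pred i)
             end
  | App M P => App (subst_rec N M k) (subst_rec N P k)
  | Lam A M => Lam (subst_rec N A k) (subst_rec N M (S k))
  | Pi A B => Pi (subst_rec N A k) (subst_rec N B (S k))
  end.
Definition subst {Srt} (N t : term Srt) := subst_rec N t 0.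

Inductive beta1 {Srt} : term Srt -> term Srt -> Prop :=
| beta_red A M N : beta1 (App (Lam A M) N) (subst N M)
| beta_appl M M' N : beta1 M M' -> beta1 (App M N) (App M' N)
| beta_appr M N N' : beta1 N N' -> beta1 (App M N) (App M N')
| beta_laml A A' M : beta1 A A' -> beta1 (Lam A M) (Lam A' M)
| beta_lamr A M M' : beta1 M M' -> beta1 (Lam A M) (Lam A M')
| beta_pil A A' B : beta1 A A' -> beta1 (Pi A B) (Pi A' B)
| beta_pir A B B' : beta1 B B' -> beta1 (Pi A B) (Pi A B').

Definition conv {Srt} : term Srt -> term Srt -> Prop :=
  clos_refl_sym_trans (term Srt) beta1.

(* contexts: head of the list is the most recent declaration (index 0) *)
Definition ctx (Srt : Type) := list (term Srt).

Inductive typ (S : spec) : ctx (sorts S) -> term (sorts S) -> term (sorts S) -> Prop :=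
| t_axiom s1 s2 : axiom S s1 s2 -> typ S [] (Sort s1) (Sort s2)
| t_start G A s : typ S G A (Sort s) -> typ S (A :: G) (Var 0) (lift 1 A)
| t_weak G M B C s :
    typ S G M B -> typ S G C (Sort s) -> typ S (C :: G) (lift 1 M) (lift 1 B)
| t_prod G A B s1 s2 s3 :
    rule S s1 s2 s3 -> typ S G A (Sort s1) -> typ S (A :: G) B (Sort s2) ->
    typ S G (Pi A B) (Sort s3)
| t_abs G A M B s :
    typ S (A :: G) M B -> typ S G (Pi A B) (Sort s) -> typ S G (Lam A M) (Pi A B)
| t_app G M N A B :
    typ S G M (Pi A B) -> typ S G N A -> typ S G (App M N) (subst N B)
| t_conv G M B B' s :
    typ S G M B -> typ S G B' (Sort s) -> conv B B' -> typ S G M B'.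

Inductive wf (S : spec) : ctx (sorts S) -> Prop :=
| wf_nil : wf S []
| wf_cons G A s : typ S G A (Sort s) -> wf S (A :: G).

Definition gamma_term (S : spec) (G : ctx (sorts S)) (M : term (sorts S)) : Prop :=
  wf S G /\ exists A, typ S G M A.
Definition gamma_type (S : spec) (G : ctx (sorts S)) (A : term (sorts S)) : Prop :=
  wf S G /\ ((exists s, typ S G A (Sort s)) \/ exists s, A = Sort s).

Inductive tterm (Srt : Type) : Type :=
| TVar  : nat -> tterm Srt
| TApp  : tterm Srt -> tterm Srt -> tterm Srt
| TLam  : tterm Srt -> tterm Srt -> tterm Srt
| TProd : tterm Srt -> tterm Srt -> tterm Srt
| TType : tterm Srt
| TU    : Srt -> tterm Srt
| TEps  : Srt -> tterm Srt
| TDot  : Srt -> tterm Srt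
| TPiC  : Srt -> Srt -> Srt -> tterm Srt.
Arguments TVar {Srt} _.
Arguments TType {Srt}.

(* ---------- forward translation |.|_G and ||.||_G ----------
   Given as inductive relations following the defining clauses: the sorts
   s1, s2, s3 (resp. s) are those with G |- A : s1, G,x:A |- B : s2,
   (s1,s2,s3) in R (resp. G |- A : s).  For a functional specification these
   relations are functional (uniqueness of types). *)
Inductive trm (S : spec) : ctx (sorts S) -> term (sorts S) -> tterm (sorts S) -> Prop :=
| tr_sort G s : trm S G (Sort s) (TDot s)
| tr_var G x : trm S G (Var x) (TVar x)
| tr_app G M N M' N' :
    trm S G M M' -> trm S G N N' -> trm S G (App M N) (TApp M' N')
| tr_lam G A M A' M' :
    trty S G A A' -> trm S (A :: G) M M' -> trm S G (Lam A M) (TLam A' M')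
| tr_pi G A B s1 s2 s3 A1 A2 B1 :
    typ S G A (Sort s1) -> typ S (A :: G) B (Sort s2) -> rule S s1 s2 s3 ->
    trm S G A A1 -> trty S G A A2 -> trm S (A :: G) B B1 ->
    trm S G (Pi A B) (TApp (TApp (TPiC s1 s2 s3) A1) (TLam A2 B1))
with trty (S : spec) : ctx (sorts S) -> term (sorts S) -> tterm (sorts S) -> Prop :=
| trt_sort G s : trty S G (Sort s) (TU s)
| trt_pi G A B A' B' :
    trty S G A A' -> trty S (A :: G) B B' -> trty S G (Pi A B) (TProd A' B')
| trt_other G A s A' :
    (forall s', A <> Sort s') -> (forall B C, A <> Pi B C) ->
    typ S G A (Sort s) -> trm S G A A' -> trty S G A (TApp (TEps s) A').

Fixpoint phi {Srt} (t : tterm Srt) : option (term Srt) :=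
  match t with
  | TDot s => Some (Sort s)
  | TPiC s1 s2 s3 =>
      (* \a:s1. \b:(a -> s2). Pi x:a. b x *)
      Some (Lam (Sort s1) (Lam (Pi (Var 0) (Sort s2)) (Pi (Var 1) (App (Var 1) (Var 0)))))
  | TVar x => Some (Var x)
  | TApp M N =>
      match phi M, phi N with
      | Some M', Some N' => Some (App M' N')
      | _, _ => None
      end
  | TLam A M =>
      match psi A, phi M with
      | Some A', Some M' => Some (Lam A' M')
      | _, _ => None
      end
  | _ => None
  end
with psi {Srt} (t : tterm Srt) : option (term Srt) :=
  match t with
  | TU s => Some (Sort s)
  | TApp (TEps _) M => phi M
  | TProd A B =>
      match psi A, psi B with
      | Some A', Some B' => Some (Pi A' B')
      | _, _ => None
      end
  | _ => None
  end.

(** Every clause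
    is inverted syntactically, except for products: there [phi] turns
    [dot_pi A (\x:A'. B)] into [(\a. \b. Pi x:a. b x) A (\x:A'. B)], which
    beta-reduces in three steps to [Pi x:A. B]; the only de Bruijn work is
    that substituting into a freshly lifted term, or substituting [x] for
    the lifted binder of an eta-expansion, gives back the original term. *)
From Stdlib Require Import Arith Relations Lia.

Scheme trm_mut := Induction for trm Sort Prop
  with trty_mut := Induction for trty Sort Prop.
Combined Scheme trm_trty_mut from trm_mut, trty_mut.

Lemma subst_rec_lift_rec {Srt} (N t : term Srt) k :
  subst_rec N (lift_rec 1 k t) k = t.
Proof.
  revert k; induction t as [s|n|M IHM P IHP|A IHA M IHM|A IHA B IHB]; intro k;
    simpl; try (f_equal; auto; fail).
  destruct (Nat.leb_spec k n); simpl.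
  - destruct (Nat.compare_spec (n + 1) k); try lia. f_equal; lia.
  - destruct (Nat.compare_spec n k); try lia; reflexivity.
Qed.

Lemma subst_rec_var0_lift_rec {Srt} (t : term Srt) k :
  subst_rec (Var 0) (lift_rec 1 (S k) t) k = t.
Proof.
  revert k; induction t as [s|n|M IHM P IHP|A IHA M IHM|A IHA B IHB]; intro k;
    try (simpl; f_equal; auto; fail).
  cbn [lift_rec]; destruct (Nat.leb_spec (S k) n); simpl.
  - destruct (Nat.compare_spec (n + 1) k); try lia. f_equal; lia.
  - destruct (Nat.compare_spec n k); try lia; subst; try reflexivity.
Qed.

Lemma conv_congr {Srt} (f : term Srt -> term Srt) :
  (forall x y, beta1 x y -> beta1 (f x) (f y)) ->
  forall x y, conv x y -> conv (f x) (f y).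
Proof.
  intros Hf x y Hxy; induction Hxy.
  - apply rst_step; auto.
  - apply rst_refl.
  - apply rst_sym; auto.
  - eapply rst_trans; eauto.
Qed.

Lemma conv_congr2 {Srt} (f : term Srt -> term Srt -> term Srt) :
  (forall x x' y, beta1 x x' -> beta1 (f x y) (f x' y)) ->
  (forall x y y', beta1 y y' -> beta1 (f x y) (f x y')) ->
  forall x x' y y', conv x x' -> conv y y' -> conv (f x y) (f x' y').
Proof.
  intros Hl Hr x x' y y' Hx Hy.
  apply rst_trans with (f x' y).
  - apply (conv_congr (fun z => f z y)); auto.
  - apply (conv_congr (f x')); auto.
Qed.

Lemma conv_App {Srt} (M M' N N' : term Srt) :
  conv M M' -> conv N N' -> conv (App M N) (App M' N').
Proof. apply conv_congr2; constructor; assumption. Qed.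

Lemma conv_Lam {Srt} (A A' M M' : term Srt) :
  conv A A' -> conv M M' -> conv (Lam A M) (Lam A' M').
Proof. apply conv_congr2; constructor; assumption. Qed.

Lemma conv_Pi {Srt} (A A' B B' : term Srt) :
  conv A A' -> conv B B' -> conv (Pi A B) (Pi A' B').
Proof. apply conv_congr2; constructor; assumption. Qed.

Definition pi_code {Srt} (s1 s2 : Srt) : term Srt :=
  Lam (Sort s1) (Lam (Pi (Var 0) (Sort s2)) (Pi (Var 1) (App (Var 1) (Var 0)))).

Lemma pi_code_conv {Srt} (s1 s2 : Srt) (A A' B : term Srt) :
  conv (App (App (pi_code s1 s2) A) (Lam A' B)) (Pi A B).
Proof.
  unfold pi_code.
  apply rst_trans with
    (App (Lam (Pi (lift 0 A) (Sort s2))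
              (Pi (lift_rec 1 0 A) (App (Var 1) (Var 0)))) (Lam A' B)).
  { apply rst_step, beta_appl.
    replace (Lam (Pi (lift 0 A) (Sort s2))
                 (Pi (lift_rec 1 0 A) (App (Var 1) (Var 0))))
      with (subst A (Lam (Pi (Var 0) (Sort s2))
                         (Pi (Var 1) (App (Var 1) (Var 0))))) by reflexivity.
    apply beta_red. }
  apply rst_trans with (Pi A (App (Lam (lift 1 A') (lift_rec 1 1 B)) (Var 0))).
  { apply rst_step.
    replace (Pi A (App (Lam (lift 1 A') (lift_rec 1 1 B)) (Var 0)))
      with (subst (Lam A' B) (Pi (lift_rec 1 0 A) (App (Var 1) (Var 0)))).
    - apply beta_red.
    - unfold subst; simpl; rewrite subst_rec_lift_rec; reflexivity. }
  apply rst_step, beta_pir.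
  rewrite <- (subst_rec_var0_lift_rec B 0) at 2.
  apply beta_red.
Qed.

Definition phi_inverts {Srt} (M' : tterm Srt) (M : term Srt) : Prop :=
  exists N, phi M' = Some N /\ conv N M.

Definition psi_inverts {Srt} (A' : tterm Srt) (A : term Srt) : Prop :=
  exists N, psi A' = Some N /\ conv N A.

Lemma phi_trm_psi_trty (S : spec) :
  (forall G M M', trm S G M M' -> phi_inverts M' M) /\
  (forall G A A', trty S G A A' -> psi_inverts A' A).
Proof.
  unfold phi_inverts, psi_inverts.
  apply (trm_trty_mut S (fun _ M M' _ => exists N, phi M' = Some N /\ conv N M)
                        (fun _ A A' _ => exists N, psi A' = Some N /\ conv N A)).
  - intros G s; exists (Sort s); split; [reflexivity | apply rst_refl].
  - intros G x; exists (Var x); split; [reflexivity | apply rst_refl].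
  - intros G M N M' N' _ [M1 [EM CM]] _ [N1 [EN CN]].
    exists (App M1 N1); cbn; rewrite EM, EN; split; [reflexivity | apply conv_App; assumption].
  - intros G A M A' M' _ [A1 [EA CA]] _ [M1 [EM CM]].
    exists (Lam A1 M1); cbn; rewrite EA, EM; split; [reflexivity | apply conv_Lam; assumption].
  - intros G A B s1 s2 s3 A1 A2 B1 _ _ _ _ [N1 [E1 C1]] _ [N2 [E2 C2]] _ [N3 [E3 C3]].
    exists (App (App (pi_code s1 s2) N1) (Lam N2 N3)); cbn; rewrite E1, E2, E3.
    split; [reflexivity|].
    apply rst_trans with (Pi N1 N3); [apply pi_code_conv | apply conv_Pi; assumption].
  - intros G s; exists (Sort s); split; [reflexivity | apply rst_refl].
  - intros G A B A' B' _ [A1 [EA CA]] _ [B1 [EB CB]].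
    exists (Pi A1 B1); cbn; rewrite EA, EB; split; [reflexivity | apply conv_Pi; assumption].
  - intros G A s A' _ _ _ _ HA; exact HA.
Qed.

Theorem lemma5p9 (S : spec) (HS : functional S) (G : ctx (sorts S)) :
  (forall M, gamma_term S G M ->
     forall M', trm S G M M' -> exists N, phi M' = Some N /\ conv N M) /\
  (forall A, gamma_type S G A ->
     forall A', trty S G A A' -> exists N, psi A' = Some N /\ conv N A).
Proof.
  destruct (phi_trm_psi_trty S) as [Hphi Hpsi].
  split; intros t _ t' Ht; [exact (Hphi _ _ _ Ht) | exact (Hpsi _ _ _ Ht)].
Qed.
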